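(* Let \(D\) be a tangle diagram and \(i \mapsto g_i,\ j \mapsto u_j\) be a decorated shadow \(\mathrm{SL}(2,\mathbb{C})\)-coloring of \(D\) (corresponding to the representation \(\rho\) with \(\rho(w_i)=g_i\)), with \(u_0\) the shadow of the topmost region. Let \(\chi\) be the associated octahedral coloring. Then its holonomy agrees with \(\rho\) in the sense that \[ \mathrm{hol}_{\chi, u_0}(w_i) = \rho(w_i) \] for each Wirtinger generator \(w_i\).
   Context: Setting. \(D\) is a diagram of an oriented tangle \(T\); \(\pi(D)\) is the Wirtinger presentation of the fundamental group of the complement, with one generator \(w_i\) per arc (each segment \(i\) has generator \(w_i\)) and relations \(w_{2'} = w_1^{-1} w_2 w_1\) at positive crossings and \(w_{1'} = w_2 w_1 w_2^{-1}\) at negative crossings. For a segment \(i\), \(\uparrow i\) denotes the region above it and \(\downarrow i\) the region below it (w.r.t. the orientation of the segment). Decorated shadow coloring: each segment \(i\) gets \(g_i \in \mathrm{SL}(2,\mathbb{C})\) satisfying the Wirtinger relations and a line \(L_i \subset \mathbb{C}^2\) of row vectors with \(L_i g_i = L_i\), with \(L_{2'} = L_2 g_1\) (positive crossing) and \(L_{1'} = L_1 g_2\) (negative crossing); each region \(j\) gets a nonzero column vector \(u_j\), with \(u_{j'} = g_i u_j\) when \(j'\) is below \(j\) across \(i\). Associated octahedral coloring: choose nonzero \(v_i \in L_i\) and let \(m_i\) satisfy \(v_i g_i = m_i^{-1} v_i\). Assuming admissibility (\(\det(u_j, e_2) \ne 0\) for all regions \(j\), and \(v_i e_2 \ne 0\),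 \(v_i u_{\uparrow i} \ne 0\) for all segments \(i\), where \(e_1,e_2\) are the standard column basis vectors), set \(\chi_i = (a_i,b_i,m_i) = \left( \frac{\det(u_{\downarrow i}, e_2)}{\det(u_{\uparrow i}, e_2)},\ -\frac{v_i e_2}{v_i u_{\uparrow i}},\ m_i\right)\). Holonomy. For an octahedral color \(\chi=(a,b,m)\) let \(\chi^{\uparrow} = \begin{bmatrix} a & 0 \\ (a-1/m)/b & 1\end{bmatrix}\), \(\chi^{\downarrow} = \begin{bmatrix} 1 & (a-m)b \\ 0 & a\end{bmatrix}\), and for a column vector \(u = (u^1,u^2)^{\mathrm T}\) let \(u^{\uparrow} = \begin{bmatrix} u^1 & 0 \\ u^2 & 1\end{bmatrix}\). The fundamental groupoid \(\Pi(D)\) has one object per region and generators \(x_i^{+}\), \(x_i^{-}\) for each segment \(i\) (paths from \(\uparrow i\) to \(\downarrow i\) passing over, respectively under, the segment). The holonomy functor \(\mathrm{Hol}_\chi : \Pi(D) \to \mathrm{GL}(2,\mathbb{C})\) sends \(x_i^+ \mapsto \chi_i^{\uparrow}\) and \(x_i^- \mapsto \chi_i^{\downarrow}\). For a region \(j\), \(s_j^+\) is the over path from the topmost region \(0\) to \(j\) (passing over every strand). The functor \(\mathcal{F}: \pi(D) \to \Pi(D)\) is \(\mathcal{F}(w_i) = s^+_{\uparrow i}\, x_i^+ (x_i^-)^{-1}\, (s^+_{\uparrow i})^{-1}\). Finally \(\mathrm{hol}_{\chi,u_0}(w_i) = u_0^{\uparrow}\, \mathrm{Hol}_\chi(\mathcal{F}(w_i))\,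 (u_0^{\uparrow})^{-1}\). *)

From mathcomp Require Import all_boot all_algebra.
From mathcomp Require Import complex reals.
Set Implicit Arguments. Unset Strict Implicit. Unset Printing Implicit Defensive.
Import GRing.Theory.
Local Open Scope ring_scope.

(* Combinatorial data of an oriented tangle diagram D.
   - seg    : the segments of D (pieces of strand between crossings),
   - reg    : the regions of D (complementary regions of the diagram),
   - cross  : the crossings of D,
   - above i / below i : the regions  (up-arrow i) and (down-arrow i)
     on either side of segment i (w.r.t. the orientation of i),
   - top    : the topmost region 0,
   - at a crossing c the over-strand enters along over_in c and leaves
     along over_out c; the under-strand enters along under_in c and
     leaves along under_out c; csign c = true iff c is positive. *)
Record diagram := Diagram {
  seg : finType;
  reg : finType;
  cross : finType;
  above : seg -> reg;
  below : seg -> reg;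
  top : reg;
  over_in : cross -> seg;
  over_out : cross -> seg;
  under_in : cross -> seg;
  under_out : cross -> seg;
  csign : cross -> bool
}.

Section Defs.
Variable C : fieldType.

Definition mx2 (a b c d : C) : 'M[C]_2 :=
  \matrix_(i < 2, j < 2)
    if (i : nat) == 0%N then (if (j : nat) == 0%N then a else b)
    else (if (j : nat) == 0%N then c else d).

Definition e2 : 'cV[C]_2 := delta_mx 1 0.

Definition det_e2 (u : 'cV[C]_2) : C := \det (row_mx u e2 : 'M[C]_2).

Definition chi_up (a b m : C) : 'M[C]_2 := mx2 a 0 ((a - m^-1) / b) 1.
Definition chi_down (a b m : C) : 'M[C]_2 := mx2 1 ((a - m) * b) 0 a.

Definition u_up (u : 'cV[C]_2) : 'M[C]_2 := mx2 (u 0 0) 0 (u 1 0) 1.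
End Defs.

Section Paths.
Variable D : diagram.

(* An over path in Pi(D) is a word in the generators x_i^+ and their
   inverses: (i, true) stands for x_i^+ (from above i to below i, passing
   over i) and (i, false) for (x_i^+)^-1 (from below i to above i). *)
Fixpoint is_over_path (r : reg D) (p : seq (seg D * bool)) (t : reg D) : bool :=
  match p with
  | [::] => r == t
  | (i, true) :: p' => (above i == r) && is_over_path (below i) p' t
  | (i, false) :: p' => (below i == r) && is_over_path (above i) p' t
  end.

Variable C : fieldType.
(* Holonomy of an over path, given the images X i = Hol(x_i^+); the holonomy
   functor is covariant: Hol(p q) = Hol(p) Hol(q). *)
Fixpoint hol_path (X : seg D -> 'M[C]_2) (p : seq (seg D * bool)) : 'M[C]_2 :=
  match p with
  | [::] => 1%:M
  | (i, true) :: p' => X i *m hol_path X p'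
  | (i, false) :: p' => invmx (X i) *m hol_path X p'
  end.
End Paths.

Section Octahedral.
Variable D : diagram.
Variable C : fieldType.
Variables (u : reg D -> 'cV[C]_2) (v : seg D -> 'rV[C]_2) (m : seg D -> C).

Definition oct_a (i : seg D) : C := det_e2 (u (below i)) / det_e2 (u (above i)).
Definition oct_b (i : seg D) : C :=
  - ((v i *m e2 C) 0 0 / (v i *m u (above i)) 0 0).
Definition chi_up_of (i : seg D) : 'M[C]_2 := chi_up (oct_a i) (oct_b i) (m i).
Definition chi_down_of (i : seg D) : 'M[C]_2 := chi_down (oct_a i) (oct_b i) (m i).

(* hol_{chi,u_0}(w_i) = u_0^up Hol_chi(F(w_i)) (u_0^up)^-1, where
   F(w_i) = s x_i^+ (x_i^-)^-1 s^-1 and s is the over path from the topmost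
   region to (above i) given as the word p. *)
Definition hol_w (p : seq (seg D * bool)) (i : seg D) : 'M[C]_2 :=
  let H := hol_path chi_up_of p in
  u_up (u (top D)) *m H *m chi_up_of i *m invmx (chi_down_of i) *m invmx H
    *m invmx (u_up (u (top D))).
End Octahedral.

(* Write U_j for u_j^up.  Each segment i carries the two identities
   U_(up i) chi_i^up = U_(down i) and g_i U_(up i) chi_i^down = U_(down i),
   a 2x2 computation using that v_i is a left eigenvector of g_i for m_i^-1,
   hence (det g_i = 1) of g_i^-1 for m_i.  The first identity telescopes along
   the over path s, giving U_0 Hol(s) = U_(up i); conjugating, hol(w_i) becomes
   U_(up i) chi_i^up (chi_i^down)^-1 U_(up i)^-1 = g_i by the second one. *)
From mathcomp Require Import all_boot all_algebra.
From mathcomp Require Import complex reals.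
From mathcomp Require Import ring.
Set Implicit Arguments. Unset Strict Implicit. Unset Printing Implicit Defensive.
Import GRing.Theory.
Local Open Scope ring_scope.

Section Mx2.
Variable C : fieldType.
Implicit Types (a b c d : C).

Lemma ord2P (i : 'I_2) : i = 0 \/ i = 1.
Proof. by case: i => [[|[|k]] lt_k2]; [left | right | by []]; apply/val_inj. Qed.

Lemma mulmx2E n p (A : 'M[C]_(n, 2)) (B : 'M[C]_(2, p)) i j :
  (A *m B) i j = A i 0 * B 0 j + A i 1 * B 1 j.
Proof.
rewrite mxE !big_ord_recl big_ord0 addr0.
by congr (A i _ * B _ j + A i _ * B _ j); apply/val_inj.
Qed.

Lemma mx2_00 a b c d : mx2 a b c d 0 0 = a. Proof. by rewrite mxE. Qed.
Lemma mx2_01 a b c d : mx2 a b c d 0 1 = b. Proof. by rewrite mxE. Qed.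
Lemma mx2_10 a b c d : mx2 a b c d 1 0 = c. Proof. by rewrite mxE. Qed.
Lemma mx2_11 a b c d : mx2 a b c d 1 1 = d. Proof. by rewrite mxE. Qed.
Definition mx2E := (mx2_00, mx2_01, mx2_10, mx2_11).

Lemma mx2_eta (A : 'M[C]_2) : A = mx2 (A 0 0) (A 0 1) (A 1 0) (A 1 1).
Proof.
by apply/matrixP => i j; rewrite mxE; case: (ord2P i) => ->; case: (ord2P j) => ->.
Qed.

Lemma mx2_mul a b c d a' b' c' d' :
  mx2 a b c d *m mx2 a' b' c' d' =
  mx2 (a * a' + b * c') (a * b' + b * d') (c * a' + d * c') (c * b' + d * d').
Proof.
apply/matrixP => i j; rewrite mulmx2E.
by case: (ord2P i) => ->; case: (ord2P j) => ->; rewrite !mx2E.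
Qed.

Lemma det_mx2 a b c d : \det (mx2 a b c d) = a * d - b * c.
Proof.
rewrite (expand_det_row _ 0) !big_ord_recl big_ord0 /cofactor !det_mx11 !mxE /=.
by rewrite expr0 expr1 mul1r mulN1r addr0 mulrN.
Qed.

Lemma mulmx_e2 n (A : 'M[C]_(n, 2)) i : (A *m e2 C) i 0 = A i 1.
Proof. by rewrite mulmx2E !mxE /= mulr0 mulr1 add0r. Qed.

Lemma row_mx_e2 (x : 'cV[C]_2) : row_mx x (e2 C) = u_up x.
Proof.
apply/matrixP => i j; rewrite !mxE; case: splitP => k; rewrite ord1 => ->.
  by case: (ord2P i) => ->.
by rewrite mxE; case: (ord2P i) => ->.
Qed.

Lemma det_u_up (x : 'cV[C]_2) : \det (u_up x) = x 0 0.
Proof. by rewrite det_mx2 mulr1 mul0r subr0. Qed.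

Lemma det_e2E (x : 'cV[C]_2) : det_e2 x = x 0 0.
Proof. by rewrite /det_e2 row_mx_e2 det_u_up. Qed.

Lemma u_up_unitmx (x : 'cV[C]_2) : (u_up x \in unitmx) = (x 0 0 != 0).
Proof. by rewrite unitmxE det_u_up unitfE. Qed.
End Mx2.

Section EigenScalars.
Variable C : fieldType.
Variables g00 g01 g10 g11 x0 x1 v0 v1 m : C.
Hypothesis det_g : g00 * g11 - g01 * g10 = 1.
Hypothesis eig0 : v0 * g00 + v1 * g10 = m^-1 * v0.
Hypothesis eig1 : v0 * g01 + v1 * g11 = m^-1 * v1.
Hypothesis v1_neq0 : v1 != 0.

(* v g adj(g) = (det g) v = v, read on the second coordinate. *)
Lemma eigen_adj_entry1 : m^-1 * (v1 * g00 - v0 * g01) = v1.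
Proof.
rewrite -[RHS]mulr1 -det_g.
transitivity (g00 * (v0 * g01 + v1 * g11) - g01 * (v0 * g00 + v1 * g10)); last by ring.
by rewrite eig0 eig1; ring.
Qed.

(* As 0^-1 = 0, m = 0 would mean v g = 0, which det g = 1 forbids. *)
Lemma eigenvalue_neq0 : m != 0.
Proof.
by apply: contra_neq v1_neq0 => m0; rewrite -eigen_adj_entry1 m0 invr0 mul0r.
Qed.

Lemma eigen_entries :
  [/\ g00 = m + v0 * g01 / v1, g10 = (m^-1 * v0 - v0 * g00) / v1
    & g11 = (m^-1 * v1 - v0 * g01) / v1].
Proof.
have m_neq0 := eigenvalue_neq0.
split; [| by rewrite -eig0; field | by rewrite -eig1; field].
have adj_eig : v1 * g00 - v0 * g01 = m * v1.
  by apply: (mulfI (invr_neq0 m_neq0)); rewrite eigen_adj_entry1 mulrA mulVf ?mul1r.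
have -> : g00 = (v1 * g00 - v0 * g01 + v0 * g01) / v1 by field.
by rewrite adj_eig; field.
Qed.

Hypotheses (x0_neq0 : x0 != 0) (vx_neq0 : v0 * x0 + v1 * x1 != 0).
Let y0 := g00 * x0 + g01 * x1.
Let y1 := g10 * x0 + g11 * x1.
Let a := y0 / x0.
Let b := - (v1 / (v0 * x0 + v1 * x1)).

Lemma chi_up_entry : y1 = x1 * a + (a - m^-1) / b.
Proof.
have m_neq0 := eigenvalue_neq0; have [e00 e10 e11] := eigen_entries.
rewrite /y1 /a /b /y0 e10 e11 e00.
by field; rewrite oppr_eq0 vx_neq0 v1_neq0 m_neq0 x0_neq0.
Qed.

Lemma chi_down_entry0 : y0 * ((a - m) * b) + g01 * a = 0.
Proof.
have [e00 _ _] := eigen_entries.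
rewrite /a /b /y0 e00.
by field; rewrite vx_neq0 v1_neq0 x0_neq0.
Qed.

Lemma chi_down_entry1 : y1 * ((a - m) * b) + g11 * a = 1.
Proof.
have m_neq0 := eigenvalue_neq0; have [e00 e10 e11] := eigen_entries.
rewrite /y1 /a /b /y0 e10 e11 e00.
by field; rewrite vx_neq0 v1_neq0 m_neq0 x0_neq0.
Qed.
End EigenScalars.

Section SegmentColoring.
Variable C : fieldType.
Variables (g : 'M[C]_2) (x : 'cV[C]_2) (v : 'rV[C]_2) (m : C).
Hypotheses (det_g : \det g = 1) (eig : v *m g = m^-1 *: v).
Hypotheses (x0_neq0 : x 0 0 != 0) (ve2_neq0 : (v *m e2 C) 0 0 != 0).
Hypothesis vx_neq0 : (v *m x) 0 0 != 0.
Let a := det_e2 (g *m x) / det_e2 x.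
Let b := - ((v *m e2 C) 0 0 / (v *m x) 0 0).

Let det_g_entries : g 0 0 * g 1 1 - g 0 1 * g 1 0 = 1.
Proof. by rewrite -det_g [in RHS](mx2_eta g) det_mx2. Qed.

Let eig_entry j : v 0 0 * g 0 j + v 0 1 * g 1 j = m^-1 * v 0 j.
Proof. by rewrite -mulmx2E eig mxE. Qed.

Let v1_neq0 : v 0 1 != 0.
Proof. by rewrite -mulmx_e2. Qed.

Let vx_entries_neq0 : v 0 0 * x 0 0 + v 0 1 * x 1 0 != 0.
Proof. by rewrite -mulmx2E. Qed.

Lemma u_up_chi_up : u_up x *m chi_up a b m = u_up (g *m x).
Proof.
rewrite /a /b !det_e2E mulmx_e2 /u_up /chi_up !mulmx2E mx2_mul.
congr mx2; rewrite ?mulr0 ?mul0r ?mulr1 ?mul1r ?addr0 ?add0r //.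
  by rewrite mulrC divfK.
symmetry; exact: (chi_up_entry det_g_entries (eig_entry 0) (eig_entry 1)).
Qed.

Lemma u_up_chi_down : g *m u_up x *m chi_down a b m = u_up (g *m x).
Proof.
rewrite /a /b !det_e2E mulmx_e2 /u_up /chi_down !mulmx2E {1}(mx2_eta g) !mx2_mul.
congr mx2; rewrite ?mulr0 ?mul0r ?mulr1 ?mul1r ?addr0 ?add0r //.
  exact: (chi_down_entry0 det_g_entries (eig_entry 0) (eig_entry 1)).
exact: (chi_down_entry1 det_g_entries (eig_entry 0) (eig_entry 1)).
Qed.
End SegmentColoring.

Section OverPaths.
Variables (D : diagram) (C : fieldType).
Variables (U : reg D -> 'M[C]_2) (X : seg D -> 'M[C]_2).
Hypothesis X_unit : forall k, X k \in unitmx.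
Hypothesis U_X : forall k, U (above k) *m X k = U (below k).

Lemma hol_over_path r p t : is_over_path r p t -> U r *m hol_path X p = U t.
Proof.
elim: p r => [|[k []] p IHp] r /=; first by move=> /eqP ->; rewrite mulmx1.
  by case/andP => /eqP <- /IHp; rewrite mulmxA U_X.
by case/andP => /eqP <- /IHp; rewrite mulmxA -U_X mulmxK.
Qed.
End OverPaths.

Theorem theoremA (R : realType) (D : diagram)
  (g : seg D -> 'M[R[i]]_2) (L : seg D -> 'rV[R[i]]_2)
  (u : reg D -> 'cV[R[i]]_2)
  (v : seg D -> 'rV[R[i]]_2) (m : seg D -> R[i]) :
  (* decorated shadow SL(2,C)-coloring: segments *)
  (forall i, \det (g i) = 1) ->
  (forall i, L i != 0) ->
  (forall i, (L i *m g i == L i)%MS) ->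
  (* Wirtinger relations at crossings, and the lines L *)
  (forall c : cross D,
     [/\ g (over_out c) = g (over_in c),
         (L (over_out c) == L (over_in c))%MS,
         g (under_out c) =
           (if csign c then invmx (g (over_in c)) *m g (under_in c) *m g (over_in c)
            else g (over_in c) *m g (under_in c) *m invmx (g (over_in c)))
       & (L (under_out c) == L (under_in c) *m g (over_in c))%MS]) ->
  (* regions *)
  (forall j, u j != 0) ->
  (forall i, u (below i) = g i *m u (above i)) ->
  (* choice of v_i in L_i and of m_i *)
  (forall i, v i != 0 /\ (v i <= L i)%MS) ->
  (forall i, v i *m g i = (m i)^-1 *: v i) ->
  (* admissibility *)
  (forall j, det_e2 (u j) != 0) ->
  (forall i, (v i *m e2 _) 0 0 != 0) ->
  (forall i, (v i *m u (above i)) 0 0 != 0) ->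
  (* conclusion: hol_{chi,u_0}(w_i) = rho(w_i) = g_i, for any over path s^+ *)
  forall (i : seg D) (p : seq (seg D * bool)),
    is_over_path (top D) p (above i) ->
    hol_w u v m p i = g i.
Proof.
move=> det_g _ _ _ _ u_below _ eig det_u ve2 vu i p s_path.
have U_unit j : u_up (u j) \in unitmx by rewrite u_up_unitmx -det_e2E.
have seg_up k : u_up (u (above k)) *m chi_up_of u v m k = u_up (u (below k)).
  by rewrite /chi_up_of /oct_a u_below u_up_chi_up // -det_e2E.
have seg_down k : g k *m u_up (u (above k)) *m chi_down_of u v m k = u_up (u (below k)).
  by rewrite /chi_down_of /oct_a u_below u_up_chi_down // -det_e2E.
have chi_up_unit k : chi_up_of u v m k \in unitmx.
  by have := U_unit (below k); rewrite -seg_up unitmx_mul => /andP[].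
have chi_down_unit k : chi_down_of u v m k \in unitmx.
  by have := U_unit (below k); rewrite -seg_down unitmx_mul => /andP[].
have s_hol : u_up (u (top D)) *m hol_path (chi_up_of u v m) p = u_up (u (above i)).
  exact: (hol_over_path (U := fun j => u_up (u j)) chi_up_unit seg_up).
have s_unit : hol_path (chi_up_of u v m) p \in unitmx.
  by have := U_unit (above i); rewrite -s_hol unitmx_mul => /andP[].
rewrite /hol_w s_hol seg_up -seg_down mulmxK // -s_hol mulmxA.
by rewrite mulmxK // mulmxK.
Qed.
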